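(* For each $h\in\{1,2\}$, let $\mathrm{oct}_h\in\mathbb{OCT}_n$ be a non-empty rational octagonal shape represented by the strongly closed octagonal graph $G_h=(\mathcal{N},w_h)$, and let $R_h$ be a subgraph of $G_h$ such that $\mathrm{S\text{-}closure}(R_h)=G_h$. Let $G_1\sqcup G_2=(\mathcal{N},w)$. Then $\mathrm{oct}_1\uplus\mathrm{oct}_2\neq\mathrm{oct}_1\cup\mathrm{oct}_2$ if and only if there exist an arc $(i,j)$ of $R_1$ and an arc $(k,\ell)$ of $R_2$ such that (1a) $w_1(i,j)<w_2(i,j)$; (1b) $w_2(k,\ell)<w_1(k,\ell)$; (2a) $w_1(i,j)+w_2(k,\ell)<w(i,\ell)+w(k,j)$; (2b) $w_1(i,j)+w_2(k,\ell)<w(i,\bar k)+w(\bar\jmath,\ell)$; (3a) $2w_1(i,j)+w_2(k,\ell)<w(i,\ell)+w(i,\bar k)+w(\bar\jmath,j)$; (3b) $2w_1(i,j)+w_2(k,\ell)<w(k,j)+w(\bar\jmath,\ell)+w(i,\bar\imath)$; (4a) $w_1(i,j)+2w_2(k,\ell)<w(i,\ell)+w(\bar\jmath,\ell)+w(k,\bar k)$; (4b) $w_1(i,j)+2w_2(k,\ell)<w(k,j)+w(i,\bar k)+w(\bar\ell,\ell)$.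
   Context: Let $\mathcal{N}=\{0,\dots,2n-1\}$; node $2s$ stands for $+x_{s+1}$ and node $2s+1$ for $-x_{s+1}$. For $i\in\mathcal{N}$, $\bar\imath=i+1$ if $i$ is even and $\bar\imath=i-1$ if $i$ is odd. For $\mathbf{v}\in\mathbb{R}^n$ let $\tilde\pi_{2s}(\mathbf{v})=v_{s+1}$ and $\tilde\pi_{2s+1}(\mathbf{v})=-v_{s+1}$. A graph is $(\mathcal{N},w)$ with $w:\mathcal{N}\times\mathcal{N}\to\mathbb{Q}\cup\{+\infty\}$ ($d<+\infty$, $d+(+\infty)=+\infty$); $(i,j)$ is an arc if $w(i,j)<+\infty$; it is consistent if no cycle has negative total weight; $G\unlhd G'$ iff $w\le w'$ pointwise. An octagonal graph is a consistent graph with $w(i,j)=w(\bar\jmath,\bar\imath)$ for all $i,j$. It is closed if $w(i,i)=0$ and $w(i,j)\le w(i,k)+w(k,j)$ for all $i,j,k$, and strongly closed if moreover $2w(i,j)\le w(i,\bar\imath)+w(\bar\jmath,j)$ for all $i,j$. $\mathrm{S\text{-}closure}(G)$ is the pointwise maximum of all strongly closed octagonal graphs $G'\unlhd G$. $R$ is a subgraph of $G$ if every arc of $R$ is an arc of $G$ with the same weight. A (rational) octagonal shape is a subset of $\mathbb{R}^n$ defined by finitely many constraints $\pm x_i\le b$, $\pm x_i\pm x_j\le b$ with $b\in\mathbb{Q}$; $\mathbb{OCT}_n$ is the set of them. An octagonal graph $G$ represents $\{\mathbf{x}\in\mathbb{R}^n : \tilde\pi_i(\mathbf{x})-\tilde\pi_j(\mathbf{x})\le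 w(i,j)\ \forall i,j\in\mathcal{N}\}$. $G_1\sqcup G_2=(\mathcal{N},\max(w_1,w_2))$ pointwise. $\mathrm{oct}_1\uplus\mathrm{oct}_2$ is the least octagonal shape containing $\mathrm{oct}_1\cup\mathrm{oct}_2$, represented by $G_1\sqcup G_2$. *)

From mathcomp Require Import all_boot all_order all_algebra.
From mathcomp Require Import reals.
Set Implicit Arguments. Unset Strict Implicit. Unset Printing Implicit Defensive.
Import Order.TTheory GRing.Theory Num.Theory.
Local Open Scope ring_scope.

(** Weights: Q ∪ {+oo}; [None] is +oo. *)
Definition wt := option rat.
Definition wadd (a b : wt) : wt :=
  match a, b with Some x, Some y => Some (x + y) | _, _ => None end.
Definition wle (a b : wt) : bool :=
  match a, b with
  | _, None => true | None, Some _ => false | Some x, Some y => (x <= y) end.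
Definition wlt (a b : wt) : bool :=
  match a, b with
  | None, _ => false | Some _, None => true | Some x, Some y => (x < y) end.
Definition wmax (a b : wt) : wt := if wle a b then b else a.

(** Nodes N = {0, ..., 2n-1}: node 2s is +x_{s+1}, node 2s+1 is -x_{s+1}. *)
Definition node (n : nat) := 'I_(2 * n).

Lemma bar_proof n (i : node n) : ((if odd i then i.-1 else i.+1) < 2 * n)%N.
Proof.
case: ifP => Hi; first exact: leq_ltn_trans (leq_pred _) (ltn_ord i).
rewrite ltn_neqAle ltn_ord andbT; apply/eqP => E.
by move: (congr1 odd E); rewrite /= Hi oddM andFb.
Qed.

Definition bar n (i : node n) : node n := Ordinal (bar_proof i).

Lemma half_proof n (i : node n) : (i./2 < n)%N.
Proof. by rewrite ltn_half_double -mul2n ltn_ord. Qed.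

Definition var_of n (i : node n) : 'I_n := Ordinal (half_proof i).

Definition pit (R : realType) n (i : node n) (v : 'rV[R]_n) : R :=
  if odd i then - v ord0 (var_of i) else v ord0 (var_of i).

Definition graph n := node n -> node n -> wt.

Definition is_arc n (G : graph n) (i j : node n) : bool := G i j != None.

(** total weight of the closed walk s_0 -> s_1 -> ... -> s_k -> s_0 *)
Definition cycle_weight n (G : graph n) (s : seq (node n)) : wt :=
  foldr wadd (Some 0) [seq G p.1 p.2 | p <- zip s (rot 1 s)].

Definition consistent n (G : graph n) : Prop :=
  forall s : seq (node n), s != [::] ->
    ~ (exists d : rat, cycle_weight G s = Some d /\ d < 0).

Definition gle n (G G' : graph n) : Prop := forall i j, wle (G i j) (G' i j).

Definition octagonal n (G : graph n) : Prop :=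
  consistent G /\ forall i j, G i j = G (bar j) (bar i).

Definition closed n (G : graph n) : Prop :=
  (forall i, G i i = Some 0) /\
  (forall i j k, wle (G i j) (wadd (G i k) (G k j))).

Definition strongly_closed n (G : graph n) : Prop :=
  closed G /\
  forall i j, wle (wadd (G i j) (G i j)) (wadd (G i (bar i)) (G (bar j) j)).

(** [is_Sclosure G C] : C = S-closure(G), the pointwise maximum of all
    strongly closed octagonal graphs G' ⊴ G. *)
Definition is_Sclosure n (G C : graph n) : Prop :=
  forall i j,
    (exists G' : graph n, [/\ octagonal G', strongly_closed G', gle G' G
                            & G' i j = C i j]) /\
    (forall G' : graph n, octagonal G' -> strongly_closed G' -> gle G' G ->
        wle (G' i j) (C i j)).

Definition subgraph n (R G : graph n) : Prop :=
  forall i j, is_arc R i j -> R i j = G i j.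

Definition gamma (R : realType) n (G : graph n) : 'rV[R]_n -> Prop :=
  fun x => forall i j d, G i j = Some d -> pit i x - pit j x <= ratr d.

Arguments gamma R {n} G x.

(** Octagonal constraints  ±x_s <= b  and  ±x_s ±x_t <= b  (b rational);
    a boolean [true] sign means minus. *)
Inductive oct_constr (n : nat) :=
  | OUnary of bool & 'I_n & rat
  | OBinary of bool & 'I_n & bool & 'I_n & rat.

Definition sgn (R : realType) (b : bool) (r : R) : R := if b then - r else r.

Definition sat_constr (R : realType) n (c : oct_constr n) (x : 'rV[R]_n) : Prop :=
  match c with
  | OUnary b s d => sgn b (x ord0 s) <= ratr d
  | OBinary b s b' t d => sgn b (x ord0 s) + sgn b' (x ord0 t) <= ratr d
  end.

Definition is_oct (R : realType) n (O : 'rV[R]_n -> Prop) : Prop :=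
  exists cs : seq (oct_constr n),
    forall x, O x <-> foldr (fun c P => sat_constr c x /\ P) True cs.

(** oct1 ⊎ oct2 : the least octagonal shape containing oct1 ∪ oct2, taken
    as the intersection of all octagonal shapes containing the union
    (this coincides with the least such shape whenever it exists). *)
Definition oct_join (R : realType) n (O1 O2 : 'rV[R]_n -> Prop) : 'rV[R]_n -> Prop :=
  fun x => forall O, is_oct O -> (forall y, O1 y \/ O2 y -> O y) -> O x.

From Pilot Require Import Defs.
From mathcomp Require Import all_boot all_order all_algebra.
From mathcomp Require Import reals.
From mathcomp.algebra_tactics Require Import lra.
From mathcomp Require Import zify.
From Stdlib Require Import Classical.
Set Implicit Arguments. Unset Strict Implicit. Unset Printing Implicit Defensive.
Import Order.TTheory GRing.Theory Num.Theory.
Local Open Scope ring_scope.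

(* Strong closure makes every weight tight: if all points of the shape of G satisfied
   x_p - x_q <= r with r < w(p,q), adding x_q - x_p <= -c for some r < c < w(p,q)
   (and its mirror image) and re-closing would stay consistent and give a point violating
   the bound.  Hence oct_1 ⊎ oct_2 is the shape of G_1 ⊔ G_2, and as R_h represents the
   same shape as its S-closure G_h, the hull differs from the union iff some point x of
   G_1 ⊔ G_2 violates an arc (i,j) of R_1 and an arc (k,l) of R_2.  Summing the
   constraints of G_1 ⊔ G_2 at x along the relevant paths gives (1a)-(4b).  Conversely,
   (1a)-(4b), with a small slack e, are exactly what keeps G_1 ⊔ G_2 consistent while it
   is tightened, one arc at a time, by x_j - x_i <= -(w_1(i,j) + e) and
   x_l - x_k <= -(w_2(k,l) + e) and their mirror images; a point of the result lies in
   the hull but in neither shape. *)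

Definition wmin (a b : wt) : wt := if wle a b then a else b.

Ltac wsimp := unfold wmin, wmax in *; cbn [wadd wle wlt] in *.
Ltac wsolve := intros;
  repeat match goal with x : wt |- _ => destruct x end; wsimp;
  repeat match goal with |- context [if ?a <= ?b then _ else _] => case: (lerP a b) => ? end;
  wsimp; try done; try congr Some; lra.

Lemma wle_refl a : wle a a. Proof. wsolve. Qed.
Lemma wle_trans a b c : wle a b -> wle b c -> wle a c. Proof. wsolve. Qed.
Lemma wlt_le_trans a b c : wlt a b -> wle b c -> wlt a c. Proof. wsolve. Qed.
Lemma wle_Some (a b : rat) X : a <= b -> wle (Some b) X -> wle (Some a) X.
Proof. wsolve. Qed.

Lemma wmin_lel a b : wle (wmin a b) a. Proof. wsolve. Qed.
Lemma wmin_ler a b : wle (wmin a b) b. Proof. wsolve. Qed.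
Lemma wle_min x a b : wle x (wmin a b) = wle x a && wle x b.
Proof.
apply/idP/andP => [h|[h1 h2]]; last by rewrite /wmin; case: ifP.
by split; apply: wle_trans h _; [apply: wmin_lel|apply: wmin_ler].
Qed.
Lemma wadd_minl a b c : wadd (wmin a b) c = wmin (wadd a c) (wadd b c).
Proof. wsolve. Qed.
Lemma wadd_minr a b c : wadd c (wmin a b) = wmin (wadd c a) (wadd c b).
Proof. wsolve. Qed.

Lemma wmax_lel a b : wle a (wmax a b). Proof. wsolve. Qed.
Lemma wmax_ler a b : wle b (wmax a b). Proof. wsolve. Qed.
Lemma wmax_le a b c : wle a c -> wle b c -> wle (wmax a b) c. Proof. wsolve. Qed.
Lemma wlt_wmaxl a b : wlt a (wmax a b) -> wlt a b.
Proof. by rewrite /wmax; case: ifP => // _; case: a => //= a; rewrite ltxx. Qed.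
Lemma wlt_wmaxr a b : wlt b (wmax a b) -> wlt b a.
Proof. by rewrite /wmax; case: ifP => // _; case: b => //= b; rewrite ltxx. Qed.
Lemma wmax_wadd_le a1 b1 c1 a2 b2 c2 :
  wle a1 (wadd b1 c1) -> wle a2 (wadd b2 c2) ->
  wle (wmax a1 a2) (wadd (wmax b1 b2) (wmax c1 c2)).
Proof. wsolve. Qed.
Lemma wmax_double_le a1 b1 c1 a2 b2 c2 :
  wle (wadd a1 a1) (wadd b1 c1) -> wle (wadd a2 a2) (wadd b2 c2) ->
  wle (wadd (wmax a1 a2) (wmax a1 a2)) (wadd (wmax b1 b2) (wmax c1 c2)).
Proof. wsolve. Qed.

Lemma wle_double x y a : wle (Some a) x -> wle (wadd x x) y -> wle (Some (a + a)) y.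
Proof. wsolve. Qed.
Lemma wle_double_sum x y z a : wle (Some a) (wadd x y) -> wle (wadd y y) z ->
  wle (Some (a + a)) (wadd (wadd x x) z).
Proof. wsolve. Qed.
Lemma waddC a b : wadd a b = wadd b a. Proof. wsolve. Qed.

Lemma tighten_diag_wt xp qx qp c :
  wle (Some 0) (wadd qp (Some c)) -> wle qp (wadd qx xp) ->
  wmin (Some 0) (wadd (wadd xp (Some c)) qx) = Some 0.
Proof. wsolve. Qed.

Lemma tighten_triangle_wt xy xr ry xp qr rp qy qp c :
  wle (Some 0) (wadd qp (Some c)) ->
  wle xy (wadd xr ry) -> wle xp (wadd xr rp) -> wle qy (wadd qr ry) ->
  wle qp (wadd qr rp) ->
  wle (wmin xy (wadd (wadd xp (Some c)) qy))
      (wadd (wmin xr (wadd (wadd xp (Some c)) qr)) (wmin ry (wadd (wadd rp (Some c)) qy))).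
Proof. wsolve. Qed.

Lemma tighten_mirror_wt qp qbq bpp c :
  wle (Some 0) (wadd qp (Some c)) -> wle (wadd qp qp) (wadd qbq bpp) ->
  wle (Some 0) (wadd (wmin qp (wadd (wadd bpp (Some c)) qbq)) (Some c)).
Proof. wsolve. Qed.

Lemma wlt_gap a X : wlt (Some a) X -> exists2 d, 0 < d & wle (Some (a + d)) X.
Proof.
case: X => [x|] /= h; last by exists 1.
by exists (x - a); rewrite /= ?subr_gt0 // addrC subrK.
Qed.

Lemma wlt_common_gap (s : seq (rat * wt)) :
  all (fun p => wlt (Some p.1) p.2) s ->
  exists2 e, 0 < e & all (fun p => wle (Some (p.1 + e)) p.2) s.
Proof.
elim: s => [|p s IH]; cbn [all]; first by exists 1.
move=> /andP [/wlt_gap [d d_gt0 hp] /IH [e e_gt0 /allP he]].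
exists (Num.min d e); first by rewrite lt_min d_gt0.
have le_d : Num.min d e <= d by rewrite ge_min lexx.
have le_e : Num.min d e <= e by rewrite ge_min lexx orbT.
rewrite (wle_Some _ hp) ?lerD2l //.
by apply/allP => q /he; apply: wle_Some; rewrite lerD2l.
Qed.

Section Nodes.
Variable n : nat.
Implicit Types i : node n.

Lemma odd_bar i : odd (bar i) = ~~ odd i.
Proof. by case: i => [[|m] ?] //=; case Hm: (odd m); rewrite /= ?Hm. Qed.

Lemma bar_bar i : bar (bar i) = i.
Proof.
apply: val_inj => /=; case: (nat_of_ord i) => [|m] //=.
by case Hm: (odd m); rewrite /= ?Hm.
Qed.

Lemma var_bar i : var_of (bar i) = var_of i.
Proof.
apply: val_inj => /=; case: (nat_of_ord i) => [|m] //=.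
by case Hm: (odd m) => /=; rewrite uphalf_half Hm.
Qed.

Lemma pit_bar (R : realType) i (x : 'rV[R]_n) : pit (bar i) x = - pit i x.
Proof. by rewrite /pit odd_bar var_bar; case: (odd i); rewrite ?opprK. Qed.

Lemma node_of_proof (b : bool) (s : 'I_n) : (2 * s + b < 2 * n)%N.
Proof. by have := ltn_ord s; case: b => /=; lia. Qed.

Definition node_of (b : bool) (s : 'I_n) : node n := Ordinal (node_of_proof b s).

Lemma odd_node_of b s : odd (node_of b s) = b.
Proof. by rewrite /= oddD mul2n odd_double; case: b. Qed.

Lemma var_node_of b s : var_of (node_of b s) = s.
Proof. by apply: val_inj; rewrite /= addnC mul2n half_bit_double. Qed.

Lemma node_of_odd_var i : node_of (odd i) (var_of i) = i.
Proof. by apply: val_inj => /=; rewrite addnC; move: (odd_double_half i); rewrite -mul2n. Qed.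

Lemma bar_node_of b s : bar (node_of b s) = node_of (~~ b) s.
Proof.
rewrite -[bar _]node_of_odd_var odd_bar var_bar odd_node_of var_node_of //.
Qed.

Lemma pit_node_of (R : realType) b s (x : 'rV[R]_n) : pit (node_of b s) x = sgn b (x ord0 s).
Proof. by rewrite /pit odd_node_of var_node_of. Qed.

End Nodes.

Section Graphs.
Variable n : nat.
Implicit Types (G H : graph n) (p q : node n).

Definition coherent G := forall i j, G i j = G (bar j) (bar i).

Definition strong_ineq G :=
  forall i j, wle (wadd (G i j) (G i j)) (wadd (G i (bar i)) (G (bar j) j)).

Lemma arc_Some G i j : is_arc G i j -> exists d, G i j = Some d.
Proof. by rewrite /is_arc; case: (G i j) => // d _; exists d. Qed.

Lemma subgraph_Some (R G : graph n) i j d : subgraph R G -> R i j = Some d -> G i j = Some d.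
Proof. by move=> sub E; rewrite -sub // /is_arc E. Qed.

Lemma gle_trans G H K : gle G H -> gle H K -> gle G K.
Proof. by move=> h1 h2 i j; apply: wle_trans (h1 i j) (h2 i j). Qed.

(* Incremental closure after adding the constraint x_p - x_q <= c: new shortest paths
   go through the arc p -> q. *)
Definition tighten G p q (c : rat) : graph n :=
  fun x y => wmin (G x y) (wadd (wadd (G x p) (Some c)) (G q y)).

Lemma tighten_le G p q c : gle (tighten G p q c) G.
Proof. by move=> x y; apply: wmin_lel. Qed.

Lemma tighten_arc G p q c : Defs.closed G -> wle (tighten G p q c p q) (Some c).
Proof.
move=> [G0 _]; apply: wle_trans (wmin_ler _ _) _.
by rewrite !G0 /= add0r addr0 lexx.
Qed.

Lemma tighten_closed G p q c :
  Defs.closed G -> wle (Some 0) (wadd (G q p) (Some c)) -> Defs.closed (tighten G p q c).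
Proof.
move=> [G0 Gt] Hc; split => [x|x y r]; rewrite /tighten.
  by rewrite G0; apply: tighten_diag_wt Hc (Gt _ _ _).
exact: tighten_triangle_wt Hc (Gt x y r) (Gt x p r) (Gt q y r) (Gt q p r).
Qed.

Definition tighten_pair G p q c := tighten (tighten G p q c) (bar q) (bar p) c.

Lemma tighten_pair_le G p q c : gle (tighten_pair G p q c) G.
Proof. exact: gle_trans (tighten_le _ _ _ _) (tighten_le _ _ _ _). Qed.

Lemma tighten_pair_closed G p q c : Defs.closed G -> coherent G -> strong_ineq G ->
  wle (Some 0) (wadd (G q p) (Some c)) -> Defs.closed (tighten_pair G p q c).
Proof.
move=> Gc Gs Gsc Hc; apply: tighten_closed; first exact: tighten_closed.
rewrite /tighten -(Gs q p); exact: tighten_mirror_wt Hc (Gsc q p).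
Qed.

Lemma tighten_pair_arc G p q c : Defs.closed G -> coherent G -> strong_ineq G ->
  wle (Some 0) (wadd (G q p) (Some c)) ->
  wle (tighten_pair G p q c p q) (Some c) /\
  wle (tighten_pair G p q c (bar q) (bar p)) (Some c).
Proof.
move=> Gc Gs Gsc Hc; split.
  exact: wle_trans (tighten_le _ _ _ _ _ _) (tighten_arc _ _ _ Gc).
by apply: tighten_arc; apply: tighten_closed.
Qed.

End Graphs.

Section Points.
Variable n : nat.
Implicit Types (G H : graph n) (p q : node n).

(* [- min_u G u v] is a potential, by the triangle inequality. *)
Lemma closed_potential G : Defs.closed G ->
  exists y : node n -> rat, forall p q d, G p q = Some d -> y p - y q <= d.
Proof.
move=> [G0 Gt].
have arc_vv v : is_arc G v v by rewrite /is_arc G0.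
pose m v := [arg min_(u < v | is_arc G u v) odflt 0 (G u v)]%O.
have m_min v u : is_arc G u v -> odflt 0 (G (m v) v) <= odflt 0 (G u v).
  by rewrite /m; case: arg_minP => [|w _ /(_ u)]; [exact: arc_vv|].
have m_arc v : is_arc G (m v) v by rewrite /m; case: arg_minP => [|w]; [exact: arc_vv|].
exists (fun v => - odflt 0 (G (m v) v)) => p q e Gpq.
move: (m_arc p); rewrite /is_arc; case Gup: (G (m p) p) => [a|] // _.
have := Gt (m p) q p; rewrite Gup Gpq /=; case Guq: (G (m p) q) => [b|] //= hb.
have := m_min q (m p); rewrite /is_arc Guq /= => /(_ isT); lra.
Qed.

(* Averaging a potential with its mirror image gives a point of the octagon. *)
Lemma closed_point G : Defs.closed G ->
  exists z : node n -> rat, (forall v, z (bar v) = - z v) /\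
    forall p q d, wle (G p q) (Some d) -> wle (G (bar q) (bar p)) (Some d) -> z p - z q <= d.
Proof.
move=> /closed_potential [y Hy].
exists (fun v => (y v - y (bar v)) / 2); split => [v|p q d]; first by rewrite bar_bar; lra.
case E1: (G p q) => [d1|] //= h1; case E2: (G (bar q) (bar p)) => [d2|] //= h2.
by have := Hy _ _ _ E1; have := Hy _ _ _ E2; lra.
Qed.

Lemma closed_below_point G H : Defs.closed H -> coherent G -> gle H G ->
  exists z : node n -> rat, [/\ forall v, z (bar v) = - z v,
    forall p q d, G p q = Some d -> z p - z q <= d &
    forall p q d, wle (H p q) (Some d) -> wle (H (bar q) (bar p)) (Some d) -> z p - z q <= d].
Proof.
move=> /closed_point [z [z_sym z_le]] Gs HG; exists z; split => // p q d E.
apply: z_le; first by apply: wle_trans (HG p q) _; rewrite E /= lexx.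
by apply: wle_trans (HG _ _) _; rewrite -Gs E /= lexx.
Qed.

Lemma tighten_point G p q c : Defs.closed G -> coherent G -> strong_ineq G ->
  wle (Some 0) (wadd (G q p) (Some c)) ->
  exists z : node n -> rat, [/\ forall v, z (bar v) = - z v,
    forall a b d, G a b = Some d -> z a - z b <= d & z p - z q <= c].
Proof.
move=> Gc Gs Gsc Hc.
have [z [z_sym zG zH]] :=
  closed_below_point (tighten_pair_closed Gc Gs Gsc Hc) Gs (@tighten_pair_le _ G p q c).
exists z; split => //; have [h1 h2] := tighten_pair_arc Gc Gs Gsc Hc.
by apply: zH; rewrite ?bar_bar.
Qed.

Definition vec_of (R : realType) (z : node n -> rat) : 'rV[R]_n :=
  \row_(s < n) ratr (z (node_of false s)).

Lemma pit_vec_of (R : realType) (z : node n -> rat) p :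
  (forall v, z (bar v) = - z v) -> pit p (vec_of R z) = ratr (z p).
Proof.
move=> z_sym; rewrite -[p]node_of_odd_var pit_node_of mxE.
case: (odd p) => //=; by rewrite -rmorphN -z_sym bar_node_of.
Qed.

Lemma gamma_vec_of (R : realType) G z : (forall v, z (bar v) = - z v) ->
  (forall a b d, G a b = Some d -> z a - z b <= d) -> gamma R G (vec_of R z).
Proof.
by move=> z_sym zG a b d E; rewrite !pit_vec_of // -rmorphB ler_rat; apply: zG E.
Qed.

End Points.

Section Semantics.
Variables (R : realType) (n : nat).
Implicit Types (G H : graph n) (p q : node n) (x : 'rV[R]_n).

Lemma gamma_mono G H x : gle G H -> gamma R G x -> gamma R H x.
Proof.
move=> GH Gx a b d E; have := GH a b; rewrite E.
by case E': (G a b) => [d'|] //= hd; apply: le_trans (Gx _ _ _ E') _; rewrite ler_rat.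
Qed.

Lemma gamma_tighten G p q c x : gamma R G x -> pit p x - pit q x <= ratr c ->
  gamma R (tighten G p q c) x.
Proof.
move=> Gx Hc a b d; rewrite /tighten /wmin; case: ifP => _; first exact: Gx.
case E1: (G a p) => [d1|] //; case E2: (G q b) => [d2|] //= [<-].
by have := Gx _ _ _ E1; have := Gx _ _ _ E2; rewrite !rmorphD /=; lra.
Qed.

Lemma gamma_consistent G p q c x : gamma R G x -> pit p x - pit q x <= ratr c ->
  wle (Some 0) (wadd (G q p) (Some c)).
Proof.
move=> Gx Hc; case E: (G q p) => [f|] //=.
by have := Gx _ _ _ E; rewrite -(ler_rat R) rmorphD rmorph0 /=; lra.
Qed.

Definition tighten_all G (L : seq (node n * node n * rat)) : graph n :=
  foldr (fun a H => tighten H a.1.1 a.1.2 a.2) G L.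

Lemma tighten_all_closed G L x : Defs.closed G -> gamma R G x ->
  (forall a, a \in L -> pit a.1.1 x - pit a.1.2 x <= ratr a.2) ->
  [/\ Defs.closed (tighten_all G L), gamma R (tighten_all G L) x &
      forall a, a \in L -> wle (tighten_all G L a.1.1 a.1.2) (Some a.2)].
Proof.
move=> Gc Gx; elim: L => [|a L IH] HL /=; first by split => // ? ?; rewrite in_nil.
have [|Fc Fx Farc] := IH; first by move=> b hb; apply: HL; rewrite in_cons hb orbT.
have Ha := HL a (mem_head a L).
split; [exact: tighten_closed (gamma_consistent Fx Ha) | exact: gamma_tighten |].
move=> b; rewrite in_cons => /predU1P [->|hb]; first exact: tighten_arc.
exact: wle_trans (tighten_le _ _ _ _ _ _) (Farc _ hb).
Qed.

Definition id_graph : graph n := fun p q => if p == q then Some 0 else None.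

Lemma id_graph_closed : Defs.closed id_graph.
Proof.
split=> [i|i j k]; rewrite /id_graph ?eqxx //.
case: (eqVneq i k) => [<-|_] /=; last by case: (i == j).
by case: (i == j) => //=; rewrite addr0.
Qed.

Lemma gamma_id_graph x : gamma R id_graph x.
Proof. by move=> i j d; rewrite /id_graph; case: eqP => // -> [<-]; rewrite subrr rmorph0. Qed.

End Semantics.

Section DifferenceGraph.
Variable n : nat.

Definition diff_graph (z : node n -> rat) : graph n := fun p q => Some (z p - z q).

Lemma cycle_weight_diff_graph z s : cycle_weight (diff_graph z) s = Some 0.
Proof.
rewrite /cycle_weight; have -> : forall t : seq (node n * node n),
    foldr wadd (Some 0) [seq diff_graph z p.1 p.2 | p <- t] = Some (\sum_(p <- t) (z p.1 - z p.2)).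
  by elim=> [|a t IH] /=; rewrite ?big_nil // IH big_cons.
have sz : (size s <= size (rot 1 s))%N by rewrite size_rot.
congr Some; rewrite big_split /= -(big_map fst predT z) -(big_map snd predT (fun v => - z v)).
rewrite [map fst _]unzip1_zip // [map snd _]unzip2_zip ?size_rot //.
have rot_s : perm_eq (rot 1 s) s by rewrite perm_rot.
by rewrite (perm_big _ rot_s) sumrN subrr.
Qed.

Lemma diff_graph_octagonal z : (forall v, z (bar v) = - z v) ->
  octagonal (diff_graph z) /\ strongly_closed (diff_graph z).
Proof.
move=> z_sym; split; split.
- by move=> s _ [d []]; rewrite cycle_weight_diff_graph => -[<-]; rewrite ltxx.
- by move=> i j; rewrite /diff_graph !z_sym; congr Some; lra.
- by split=> [i|i j k]; rewrite /diff_graph /= ?subrr //; lra.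
- by move=> i j; rewrite /diff_graph /= !z_sym; lra.
Qed.

End DifferenceGraph.

Section Constraints.
Variables (R : realType) (n : nat).
Implicit Types (G : graph n) (p q : node n) (x : 'rV[R]_n).

Definition arcs G : seq (node n * node n * rat) :=
  pmap (fun pq : node n * node n => omap (pair pq) (G pq.1 pq.2)) (enum predT).

Lemma mem_arcs G a : (a \in arcs G) = (G a.1.1 a.1.2 == Some a.2).
Proof.
case: a => [[p q] e] /=; rewrite mem_pmap; apply/mapP/eqP => [[[p' q'] _ /=]|E].
  by case E: (G p' q') => //= [e'] [-> -> ->].
by exists (p, q); rewrite ?mem_enum //= E.
Qed.

(* If x violated G1 a b = d, close [id_graph] under the arcs of R1 and under
   x_b - x_a <= -q for a rational d < q < x_a - x_b: this yields a rational point z with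
   [diff_graph z] below R1, hence below its S-closure G1, although z_a - z_b >= q > d. *)
Lemma gamma_Sclosure (R1 G1 : graph n) x : is_Sclosure R1 G1 -> gamma R R1 x -> gamma R G1 x.
Proof.
move=> HS Rx a b d E; rewrite leNgt; apply/negP => Hlt.
have [q] := rat_in_itvoo Hlt; rewrite in_itv /= ltr_rat => /andP [dq qx].
pose mirror (c : node n * node n * rat) := (bar c.1.2, bar c.1.1, c.2).
pose L := arcs R1 ++ map mirror (arcs R1) ++ [:: (b, a, - q); (bar a, bar b, - q)].
have Lx c : c \in L -> pit c.1.1 x - pit c.1.2 x <= ratr c.2.
  rewrite !mem_cat => /or3P [|/mapP [c' + ->]|]; rewrite ?mem_arcs.
  - by move=> /eqP /Rx.
  - by move=> /eqP /Rx /=; rewrite !pit_bar; lra.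
  - by rewrite !inE => /orP [] /eqP -> /=; rewrite ?pit_bar rmorphN /=; lra.
have [Fc _ FL] := tighten_all_closed (id_graph_closed n) (gamma_id_graph x) Lx.
have [z [z_sym zF]] := closed_point Fc.
have [Doct Dsc] := diff_graph_octagonal z_sym.
have DR : gle (diff_graph z) R1.
  move=> p1 p2; case E1: (R1 p1 p2) => [e|] //=; apply: zF.
    by apply: (FL (p1, p2, e)); rewrite !mem_cat mem_arcs E1 eqxx.
  by apply: (FL (mirror (p1, p2, e))); rewrite !mem_cat map_f ?orbT // mem_arcs E1.
have := (HS a b).2 _ Doct Dsc DR; rewrite /diff_graph E /= => zab.
have : z b - z a <= - q.
  by apply: zF; [apply: (FL (b, a, - q)) | apply: (FL (bar a, bar b, - q))];
    rewrite !mem_cat !inE eqxx ?orbT.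
lra.
Qed.

Definition arc_constr p q (d : rat) : oct_constr n :=
  OBinary (odd p) (var_of p) (~~ odd q) (var_of q) d.

Lemma sat_arc_constr p q d x :
  sat_constr (arc_constr p q d) x <-> pit p x - pit q x <= ratr d.
Proof. by rewrite /= /sgn /pit; case: (odd p); case: (odd q) => /=; split; lra. Qed.

Lemma sat_constr_arc (c : oct_constr n) : exists p q r, forall x,
  sat_constr c x <-> pit p x - pit q x <= ratr r.
Proof.
case: c => [b s d|b s b' t d].
  exists (node_of b s), (bar (node_of b s)), (2 * d) => x.
  by rewrite pit_bar pit_node_of /= rmorphM /= rmorph_nat; split; lra.
exists (node_of b s), (node_of (~~ b') t), d => x.
by rewrite !pit_node_of /= /sgn; case: b'; case: b => /=; split; lra.
Qed.

Lemma foldr_sat_In (cs : seq (oct_constr n)) x :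
  foldr (fun c P => sat_constr c x /\ P) True cs <-> forall c, List.In c cs -> sat_constr c x.
Proof.
elim: cs => [|c cs IH] /=; first by split.
split=> [[h1 /IH h2] c' [<-|h] //|h]; first exact: h2.
by split; [apply: h; left | apply/IH => c' h'; apply: h; right].
Qed.

Lemma foldr_sat_map (T : eqType) (s : seq T) (f : T -> oct_constr n) x :
  foldr (fun c P => sat_constr c x /\ P) True (map f s) <-> forall t, t \in s -> sat_constr (f t) x.
Proof.
elim: s => [|t s IH] /=; first by split.
split=> [[h1 /IH h2] t'|h]; first by rewrite inE => /predU1P [->|/h2].
by split; [apply: h; rewrite mem_head | apply/IH => t' h'; apply: h; rewrite inE h' orbT].
Qed.

Lemma gamma_oct G : is_oct (gamma R G).
Proof.
exists (map (fun a => arc_constr a.1.1 a.1.2 a.2) (arcs G)) => x.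
rewrite foldr_sat_map; split=> [Gx a|h p q d E].
  by rewrite mem_arcs => /eqP /Gx /sat_arc_constr.
by apply/sat_arc_constr; apply: (h (p, q, d)); rewrite mem_arcs E.
Qed.

(* Otherwise [tighten_point] would produce a point violating the bound. *)
Lemma gamma_bound_le G p q r : Defs.closed G -> coherent G -> strong_ineq G ->
  (forall y : 'rV[R]_n, gamma R G y -> pit p y - pit q y <= ratr r) -> wle (G p q) (Some r).
Proof.
move=> Gc Gs Gsc Hr.
have no_lower c : wle (Some 0) (wadd (G p q) (Some c)) -> r < - c -> False.
  move=> hc rc; have [z [z_sym zG zqp]] := tighten_point Gc Gs Gsc hc.
  by have := Hr _ (gamma_vec_of R z_sym zG); rewrite !pit_vec_of // -rmorphB ler_rat; lra.
case E: (G p q) => [e|] /=.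
  by rewrite leNgt; apply/negP => re; apply: (no_lower (- ((r + e) / 2))); rewrite ?E /=; lra.
by exfalso; apply: (no_lower (- (r + 1))); rewrite ?E //=; lra.
Qed.

End Constraints.

Definition join_graph n (G1 G2 : graph n) : graph n := fun i j => wmax (G1 i j) (G2 i j).

Section Join.
Variables (R : realType) (n : nat) (G1 G2 : graph n).

Lemma join_closed : Defs.closed G1 -> Defs.closed G2 -> Defs.closed (join_graph G1 G2).
Proof.
move=> [h1 t1] [h2 t2]; split=> [i|i j k]; first by rewrite /join_graph h1 h2.
exact: wmax_wadd_le.
Qed.

Lemma join_coherent : coherent G1 -> coherent G2 -> coherent (join_graph G1 G2).
Proof. by move=> h1 h2 i j; rewrite /join_graph h1 h2. Qed.

Lemma join_strong_ineq : strong_ineq G1 -> strong_ineq G2 -> strong_ineq (join_graph G1 G2).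
Proof. by move=> h1 h2 i j; apply: wmax_double_le. Qed.

Lemma gle_joinl : gle G1 (join_graph G1 G2). Proof. by move=> i j; apply: wmax_lel. Qed.
Lemma gle_joinr : gle G2 (join_graph G1 G2). Proof. by move=> i j; apply: wmax_ler. Qed.

Lemma oct_join_gamma x : octagonal G1 -> strongly_closed G1 ->
  octagonal G2 -> strongly_closed G2 ->
  oct_join (gamma R G1) (gamma R G2) x <-> gamma R (join_graph G1 G2) x.
Proof.
move=> [_ s1] [c1 sc1] [_ s2] [c2 sc2]; split.
  move=> h; apply: h; first exact: gamma_oct.
  by move=> y [] /gamma_mono; [apply; apply: gle_joinl | apply; apply: gle_joinr].
move=> Jx O [cs Ocs] O12; apply/Ocs/foldr_sat_In => c c_cs.
have [p [q [r c_pq]]] := sat_constr_arc R c; apply/c_pq.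
have bound G : Defs.closed G -> coherent G -> strong_ineq G ->
    (forall y, gamma R G y -> O y) -> wle (G p q) (Some r).
  move=> Gc Gs Gsc GO; apply: gamma_bound_le => // y /GO /Ocs /foldr_sat_In Oy.
  exact/c_pq/Oy.
have := wmax_le (bound _ c1 s1 sc1 (fun y h => O12 y (or_introl h)))
                (bound _ c2 s2 sc2 (fun y h => O12 y (or_intror h))).
rewrite -/(join_graph G1 G2 p q); case E: (join_graph G1 G2 p q) => [w0|] //= hw.
by apply: le_trans (Jx _ _ _ E) _; rewrite ler_rat.
Qed.

End Join.

Section Witness.
Variable n : nat.
Implicit Types (W : graph n) (i j k l : node n).

Definition inexact_witness (G1 G2 : graph n) i j k l : Prop :=
  let W := join_graph G1 G2 in
  wlt (G1 i j) (G2 i j) /\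
  wlt (G2 k l) (G1 k l) /\
  wlt (wadd (G1 i j) (G2 k l)) (wadd (W i l) (W k j)) /\
  wlt (wadd (G1 i j) (G2 k l)) (wadd (W i (bar k)) (W (bar j) l)) /\
  wlt (wadd (wadd (G1 i j) (G1 i j)) (G2 k l))
      (wadd (wadd (W i l) (W i (bar k))) (W (bar j) j)) /\
  wlt (wadd (wadd (G1 i j) (G1 i j)) (G2 k l))
      (wadd (wadd (W k j) (W (bar j) l)) (W i (bar i))) /\
  wlt (wadd (G1 i j) (wadd (G2 k l) (G2 k l)))
      (wadd (wadd (W i l) (W (bar j) l)) (W k (bar k))) /\
  wlt (wadd (G1 i j) (wadd (G2 k l) (G2 k l)))
      (wadd (wadd (W k j) (W i (bar k))) (W (bar l) l)).

Definition witness_bounds W i j k l (a b : rat) : Prop :=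
  wle (Some a) (W i j) /\
  wle (Some b) (W k l) /\
  wle (Some (a + b)) (wadd (W i l) (W k j)) /\
  wle (Some (a + b)) (wadd (W i (bar k)) (W (bar j) l)) /\
  wle (Some (a + a + b)) (wadd (wadd (W i l) (W i (bar k))) (W (bar j) j)) /\
  wle (Some (a + a + b)) (wadd (wadd (W k j) (W (bar j) l)) (W i (bar i))) /\
  wle (Some (a + (b + b))) (wadd (wadd (W i l) (W (bar j) l)) (W k (bar k))) /\
  wle (Some (a + (b + b))) (wadd (wadd (W k j) (W i (bar k))) (W (bar l) l)).

Ltac wdistr := repeat (first [rewrite wadd_minl | rewrite wadd_minr]);
  rewrite ?wle_min; repeat (apply/andP; split).
Ltac wleaf := wsimp; try done;
  tryif once (match goal with x : wt |- _ =>
                lazymatch goal with |- context [x] => destruct x end end)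
  then wleaf else lra.

(* Each bound rules out one of the negative cycles that the new arcs j -> i, l -> k
   and their mirror images could create. *)
Lemma witness_tighten_consistent W i j k l (a b : rat) :
  coherent W -> strong_ineq W -> witness_bounds W i j k l a b ->
  let A := tighten_pair W j i (- a) in
  wle (Some 0) (wadd (A k l) (Some (- b))) /\
  wle (Some 0) (wadd (tighten A l k (- b) (bar l) (bar k)) (Some (- b))).
Proof.
move=> Ws Wsc [h1a [h1b [h2a [h2b [h3a [h3b [h4a h4b]]]]]]] A.
have s1 := Wsc i j; have s2 := Wsc k l; have s3 := Wsc i (bar k).
have s4 := Wsc (bar j) l; have s5 := Wsc i l; have s6 := Wsc k j.
rewrite !bar_bar in s3 s4.
have t1 := wle_double h1a s1; have t2 := wle_double h1b s2.
have h2a' : wle (Some (a + b)) (wadd (W k j) (W i l)) by rewrite waddC.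
have h2b' : wle (Some (a + b)) (wadd (W (bar j) l) (W i (bar k))) by rewrite waddC.
have d1 := wle_double_sum h2b s4; have d2 := wle_double_sum h2a' s5.
have d3 := wle_double_sum h2a s6; have d4 := wle_double_sum h2b' s3.
(* After the coherence rewrites only ten weights of W occur; distributing [wadd] over
   [wmin] leaves linear inequalities between them, each implied by the facts above. *)
rewrite /A /tighten_pair /tighten.
rewrite ?(Ws (bar l) (bar k)) ?(Ws (bar l) j) ?(Ws (bar l) (bar i)) ?(Ws (bar j) (bar k))
  ?(Ws k (bar i)) !bar_bar.
move: h1a h1b h2a h2b h3a h3b h4a h4b s1 s2 s3 s4 s5 s6 t1 t2 d1 d2 d3 d4.
move: (W i j) (W k l) (W i l) (W k j) (W i (bar k)) (W (bar j) l) (W (bar j) j)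
  (W i (bar i)) (W k (bar k)) (W (bar l) l).
clear; intros; split; wdistr; wleaf.
Qed.

Lemma witness_bounds_point (R : realType) W i j k l a b :
  Defs.closed W -> coherent W -> strong_ineq W -> witness_bounds W i j k l a b ->
  exists x : 'rV[R]_n,
    [/\ gamma R W x, ratr a <= pit i x - pit j x & ratr b <= pit k x - pit l x].
Proof.
move=> Wc Ws Wsc hW; have [st3 st4] := witness_tighten_consistent Ws Wsc hW.
have hA : wle (Some 0) (wadd (W i j) (Some (- a))).
  by case: hW => + _; case: (W i j) => //= w; rewrite subr_ge0.
have Ac := tighten_pair_closed Wc Ws Wsc hA.
have [Aji Aij] := tighten_pair_arc Wc Ws Wsc hA.
set A := tighten_pair W j i (- a) in st3 st4 Ac Aji Aij.
have Bc := tighten_closed Ac st3; have Blk := tighten_arc l k (- b) Ac.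
set B := tighten A l k (- b) in st4 Bc Blk.
have Fc := tighten_closed Bc st4; have Fkl := tighten_arc (bar k) (bar l) (- b) Bc.
set F := tighten B (bar k) (bar l) (- b) in Fc Fkl.
have FB : gle F B by apply: tighten_le.
have BA : gle B A by apply: tighten_le.
have FW : gle F W := gle_trans FB (gle_trans BA (tighten_pair_le _ _ _ _)).
have [z [z_sym zW zF]] := closed_below_point Fc Ws FW.
have zji : z j - z i <= - a.
  by apply: zF; [apply: wle_trans (FB j i) (wle_trans (BA j i) Aji) |
                 apply: wle_trans (FB _ _) (wle_trans (BA _ _) Aij)].
have zlk : z l - z k <= - b by apply: zF; [apply: wle_trans (FB l k) Blk | exact: Fkl].
exists (vec_of R z); split; first exact: gamma_vec_of.
  by rewrite !pit_vec_of // -rmorphB ler_rat; lra.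
by rewrite !pit_vec_of // -rmorphB ler_rat; lra.
Qed.

End Witness.

Section Main.
Variables (R : realType) (n : nat).
Implicit Types (G : graph n) (p q i j k l : node n) (x : 'rV[R]_n).

Definition wbound (X : wt) (r : R) := forall d, X = Some d -> r <= ratr d.

Lemma gamma_wbound G p q x : gamma R G x -> wbound (G p q) (pit p x - pit q x).
Proof. by move=> Gx d /Gx. Qed.

Lemma wbound_add X Y r s : wbound X r -> wbound Y s -> wbound (wadd X Y) (r + s).
Proof.
case: X => [a|] //; case: Y => [b|] //= hX hY d [<-].
by rewrite rmorphD; apply: lerD; [apply: hX | apply: hY].
Qed.

Lemma wbound_wlt X r (a : rat) : wbound X r -> ratr a < r -> wlt (Some a) X.
Proof.
case: X => [d|] //= /(_ d erefl) rd ar.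
by rewrite -(ltr_rat R); apply: lt_le_trans ar rd.
Qed.

Lemma gamma_violated_arc G x : ~ gamma R G x ->
  exists i j d, G i j = Some d /\ ratr d < pit i x - pit j x.
Proof.
move=> Gx; apply: NNPP => none; apply: Gx => i j d E.
by rewrite leNgt; apply/negP => lt; apply: none; exists i, j, d.
Qed.

Lemma join_point_witness (G1 G2 : graph n) i j k l u v x :
  gamma R (join_graph G1 G2) x -> G1 i j = Some u -> G2 k l = Some v ->
  ratr u < pit i x - pit j x -> ratr v < pit k x - pit l x ->
  inexact_witness G1 G2 i j k l.
Proof.
move=> Jx Gij Gkl xij xkl; have J p q := gamma_wbound (p := p) (q := q) Jx.
have := wbound_wlt (J i j) xij; have := wbound_wlt (J k l) xkl.
rewrite /inexact_witness /join_graph Gij Gkl => /wlt_wmaxr -> /wlt_wmaxl -> /=.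
do !split.
- by apply: wbound_wlt (wbound_add (J i l) (J k j)) _; rewrite rmorphD; lra.
- apply: wbound_wlt (wbound_add (J i (bar k)) (J (bar j) l)) _.
  by rewrite !pit_bar rmorphD; lra.
- apply: wbound_wlt (wbound_add (wbound_add (J i l) (J i (bar k))) (J (bar j) j)) _.
  by rewrite !pit_bar !rmorphD; lra.
- apply: wbound_wlt (wbound_add (wbound_add (J k j) (J (bar j) l)) (J i (bar i))) _.
  by rewrite !pit_bar !rmorphD; lra.
- apply: wbound_wlt (wbound_add (wbound_add (J i l) (J (bar j) l)) (J k (bar k))) _.
  by rewrite !pit_bar !rmorphD; lra.
- apply: wbound_wlt (wbound_add (wbound_add (J k j) (J i (bar k))) (J (bar l) l)) _.
  by rewrite !pit_bar !rmorphD; lra.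
Qed.

Lemma inexact_witness_bounds (G1 G2 : graph n) i j k l u v :
  G1 i j = Some u -> G2 k l = Some v -> inexact_witness G1 G2 i j k l ->
  exists2 e, 0 < e & witness_bounds (join_graph G1 G2) i j k l (u + e) (v + e).
Proof.
rewrite /inexact_witness => Gij Gkl; rewrite Gij Gkl; cbn [wadd].
set W := join_graph G1 G2 => -[h1a [h1b [h2a [h2b [h3a [h3b [h4a h4b]]]]]]].
have h1a' : wlt (Some u) (W i j) := wlt_le_trans h1a (gle_joinr G1 G2 i j).
have h1b' : wlt (Some v) (W k l) := wlt_le_trans h1b (gle_joinl G1 G2 k l).
pose L := [:: (u, W i j); (v, W k l); (u + v, wadd (W i l) (W k j));
  (u + v, wadd (W i (bar k)) (W (bar j) l));
  (u + u + v, wadd (wadd (W i l) (W i (bar k))) (W (bar j) j));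
  (u + u + v, wadd (wadd (W k j) (W (bar j) l)) (W i (bar i)));
  (u + (v + v), wadd (wadd (W i l) (W (bar j) l)) (W k (bar k)));
  (u + (v + v), wadd (wadd (W k j) (W i (bar k))) (W (bar l) l))].
have [|e e_gt0] := @wlt_common_gap L.
  by rewrite /L; cbn [all fst snd]; rewrite h1a' h1b' h2a h2b h3a h3b h4a h4b.
rewrite /L; cbn [all fst snd] => /and5P [g1 g2 g3 g4 /and5P [g5 g6 g7 g8 _]].
(* No bound involves more than three copies of the slack. *)
exists (e / 3); first lra.
by do !split; [apply: wle_Some g1 | apply: wle_Some g2 | apply: wle_Some g3 |
  apply: wle_Some g4 | apply: wle_Some g5 | apply: wle_Some g6 |
  apply: wle_Some g7 | apply: wle_Some g8]; lra.
Qed.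

Lemma witness_join_point (G1 G2 : graph n) i j k l u v :
  Defs.closed G1 -> coherent G1 -> strong_ineq G1 ->
  Defs.closed G2 -> coherent G2 -> strong_ineq G2 ->
  G1 i j = Some u -> G2 k l = Some v -> inexact_witness G1 G2 i j k l ->
  exists x, [/\ gamma R (join_graph G1 G2) x, ~ gamma R G1 x & ~ gamma R G2 x].
Proof.
move=> c1 s1 sc1 c2 s2 sc2 Gij Gkl /(inexact_witness_bounds Gij Gkl) [e e_gt0 hW].
have [x [Jx xij xkl]] := witness_bounds_point R (join_closed c1 c2)
  (join_coherent s1 s2) (join_strong_ineq sc1 sc2) hW.
exists x; split=> // [/(_ _ _ _ Gij) | /(_ _ _ _ Gkl)] => h.
  by have := le_trans xij h; rewrite ler_rat; lra.
by have := le_trans xkl h; rewrite ler_rat; lra.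
Qed.

Lemma oct_join_neq_union (G1 G2 : graph n) :
  octagonal G1 -> strongly_closed G1 -> octagonal G2 -> strongly_closed G2 ->
  (~ forall x, oct_join (gamma R G1) (gamma R G2) x <-> gamma R G1 x \/ gamma R G2 x) <->
  exists x, [/\ gamma R (join_graph G1 G2) x, ~ gamma R G1 x & ~ gamma R G2 x].
Proof.
move=> o1 sc1 o2 sc2; have J x := oct_join_gamma x o1 sc1 o2 sc2.
split=> [neq|[x [Jx n1 n2]] eq]; last by have [] := (eq x).1 ((J x).2 Jx).
apply: NNPP => none; apply: neq => x; apply: iff_trans (J x) _; split=> [Jx|].
  by apply: NNPP => n12; apply: none; exists x; split=> // h; apply: n12; [left|right].
by case=> /gamma_mono; apply; [apply: gle_joinl | apply: gle_joinr].
Qed.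

End Main.

Theorem theorem8 (R : realType) (n : nat) (G1 G2 R1 R2 : graph n) :
  octagonal G1 -> strongly_closed G1 -> (exists x, gamma R G1 x) ->
  octagonal G2 -> strongly_closed G2 -> (exists x, gamma R G2 x) ->
  subgraph R1 G1 -> is_Sclosure R1 G1 ->
  subgraph R2 G2 -> is_Sclosure R2 G2 ->
  let w1 := G1 in let w2 := G2 in
  let w := fun i j => wmax (G1 i j) (G2 i j) in
  (~ (forall x, oct_join (gamma R G1) (gamma R G2) x <->
                (gamma R G1 x \/ gamma R G2 x)))
  <->
  (exists i j k l : node n,
     is_arc R1 i j /\ is_arc R2 k l /\
      (* 1a *) wlt (w1 i j) (w2 i j) /\
      (* 1b *) wlt (w2 k l) (w1 k l) /\
      (* 2a *) wlt (wadd (w1 i j) (w2 k l)) (wadd (w i l) (w k j)) /\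
      (* 2b *) wlt (wadd (w1 i j) (w2 k l)) (wadd (w i (bar k)) (w (bar j) l)) /\
      (* 3a *) wlt (wadd (wadd (w1 i j) (w1 i j)) (w2 k l))
                   (wadd (wadd (w i l) (w i (bar k))) (w (bar j) j)) /\
      (* 3b *) wlt (wadd (wadd (w1 i j) (w1 i j)) (w2 k l))
                   (wadd (wadd (w k j) (w (bar j) l)) (w i (bar i))) /\
      (* 4a *) wlt (wadd (w1 i j) (wadd (w2 k l) (w2 k l)))
                   (wadd (wadd (w i l) (w (bar j) l)) (w k (bar k))) /\
      (* 4b *) wlt (wadd (w1 i j) (wadd (w2 k l) (w2 k l)))
                   (wadd (wadd (w k j) (w i (bar k))) (w (bar l) l))).
Proof.
move=> o1 sc1 _ o2 sc2 _ sub1 S1 sub2 S2 w1 w2 w.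
apply: iff_trans (oct_join_neq_union R o1 sc1 o2 sc2) _; split.
- move=> [x [Jx n1 n2]].
  have [i [j [u [Rij xij]]]] := gamma_violated_arc (fun h => n1 (gamma_Sclosure S1 h)).
  have [k [l [v [Rkl xkl]]]] := gamma_violated_arc (fun h => n2 (gamma_Sclosure S2 h)).
  exists i, j, k, l; split; first by rewrite /is_arc Rij.
  split; first by rewrite /is_arc Rkl.
  exact: join_point_witness Jx (subgraph_Some sub1 Rij) (subgraph_Some sub2 Rkl) xij xkl.
- move=> [i [j [k [l [/arc_Some [u Rij] [/arc_Some [v Rkl] W]]]]]].
  exact: witness_join_point sc1.1 o1.2 sc1.2 sc2.1 o2.2 sc2.2
    (subgraph_Some sub1 Rij) (subgraph_Some sub2 Rkl) W.
Qed.
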